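(* If $\mathcal A$ and $\mathcal B$ are two distinct $\sigma$-subfields, then $\|\mathbb P_{\mathcal A}-\mathbb P_{\mathcal B}\|_{L^1\to L^1}\ge1$ and $\|\mathbb P_{\mathcal A}-\mathbb P_{\mathcal B}\|_{L^\infty\to L^\infty}\ge1/2$. Consequently, if $(\mathcal B_n)_{n\in\mathbb N_0}$ are $\sigma$-subfields with $\|\mathbb P_{\mathcal B_n}-\mathbb P_{\mathcal B_0}\|_{L^p\to L^p}\to0$ for $p=1$ or $p=\infty$, then $\mathcal B_n=\mathcal B_0$ for all sufficiently large $n$.
   Context: Let $(\Omega,\mathcal F,\mathbb P)$ be a (not necessarily complete) probability space and $\mathcal N:=\{F\in\mathcal F:\mathbb P(F)=0\}$. A $\sigma$-subfield is a sub-$\sigma$-field $\mathcal A\subset\mathcal F$ with $\mathcal A=\sigma(\mathcal A\cup\mathcal N)$. For a $\sigma$-subfield $\mathcal A$, $\mathbb P_{\mathcal A}f:=\mathbb E^{\mathbb P}[f\mid\mathcal A]$, viewed as a bounded linear operator on the real normed space $L^p(\mathbb P)$; $\|\cdot\|_{L^p\to L^p}$ is the operator norm. *)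

From HB Require Import structures.
From mathcomp Require Import all_boot all_order all_algebra.
From mathcomp Require Import all_classical all_reals all_analysis.
Set Implicit Arguments. Unset Strict Implicit. Unset Printing Implicit Defensive.
Import Order.TTheory GRing.Theory Num.Theory.
Import numFieldNormedType.Exports.
Local Open Scope classical_set_scope.
Local Open Scope ring_scope.
Local Open Scope ereal_scope.

Section Defs.
Context {d : measure_display} {T : measurableType d} {R : realType}.
Variable P : probability T R.

Definition null_sets : set (set T) := [set F | measurable F /\ P F = 0].

Definition sigma_subfield (A : set (set T)) : Prop :=
  [/\ A `<=` measurable, sigma_algebra setT A & A = <<s A `|` null_sets >>].

Definition measurable_wrt (A : set (set T)) (g : T -> R) : Prop :=
  forall U : set R, measurable U -> A (g @^-1` U).

Definition is_cond_exp (A : set (set T)) (f g : T -> R) : Prop :=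
  [/\ measurable_wrt A g, P.-integrable setT (EFin \o g) &
      forall E, A E -> \int[P]_(x in E) (g x)%:E = \int[P]_(x in E) (f x)%:E].

Definition in_Lp (p : \bar R) (f : T -> R) : Prop :=
  measurable_fun setT f /\ Lnorm P p (EFin \o f) < +oo.

(* operator norm of P_A - P_B on L^p(P):
   sup { ||P_A f - P_B f||_p : f in L^p, ||f||_p <= 1 }.
   (The value ||gA - gB||_p does not depend on the chosen versions.) *)
Definition condexp_diff_opnorm (p : \bar R) (A B : set (set T)) : \bar R :=
  ereal_sup [set v | exists f gA gB,
     [/\ in_Lp p f, Lnorm P p (EFin \o f) <= 1,
          is_cond_exp A f gA, is_cond_exp B f gB &
          v = Lnorm P p (fun x => (gA x - gB x)%:E)] ].
End Defs.

(* Let S be in A but not in B, and let h be a version of P(S | B), obtained as a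
   Radon-Nikodym derivative on the sub-sigma-algebra B.  The B-set D = {h > 1/2}
   cannot agree with S up to a null set, because B contains the null sets and
   S is not in B.  On S \ D and on D \ S we have |1_S - h| >= 1/2, which is the
   L^oo bound for f = 1_S.  For L^1 take f = 1_C / P(C) with C the one of
   S \ D, D \ S of positive measure: u = E[f | A] - E[f | B] has mean zero, so
   ||u||_1 >= 2 |int_S u|; by self-adjointness int_S E[1_C | B] = int_C h, and
   since h lies on the wrong side of 1/2 on C this gives 2 |int_S u| >= 1.
   The second statement follows because both norms are bounded away from 0
   whenever the sigma-subfields differ. *)

From HB Require Import structures.
From mathcomp Require Import all_boot all_order all_algebra.
From mathcomp Require Import all_classical all_reals all_analysis.
From mathcomp Require Import measurable_realfun ess_sup_inf lra.
Set Implicit Arguments. Unset Strict Implicit. Unset Printing Implicit Defensive.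
Import Order.TTheory GRing.Theory Num.Theory.
Import numFieldNormedType.Exports.
Local Open Scope classical_set_scope.
Local Open Scope ring_scope.
Local Open Scope ereal_scope.

Section sub_sigma_algebra.
Context d (T : measurableType d) (R : realType) (G : set (set T)).
Hypotheses (saG : sigma_algebra setT G) (subG : G `<=` measurable).
Local Notation T' := (g_sigma_algebraType G).

Let measurableGE : (measurable : set (set T')) = G.
Proof. exact: measurable_g_measurableTypeE. Qed.

Lemma sub_sigma_algebraT : G setT.
Proof. by rewrite -measurableGE. Qed.

Lemma measurable_subP (A : set T) : measurable (A : set T') <-> G A.
Proof. by rewrite measurableGE. Qed.

Lemma measurable_id_sub : measurable_fun setT (idfun : T -> T').
Proof. by move=> _ Y; rewrite measurableGE setTI; exact: subG. Qed.

Lemma measurable_wrt_sub (g : T' -> R) :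
  measurable_fun setT g -> measurable_wrt G g.
Proof. by move=> mg U mU; rewrite -measurableGE -[_ @^-1` _]setTI; exact: mg. Qed.

Lemma measurable_fun_sub d' (Y : measurableType d') (g : T' -> Y) :
  measurable_fun setT g -> measurable_fun setT (g : T -> Y).
Proof. by move=> mg; exact: measurableT_comp mg measurable_id_sub. Qed.

Definition sub_id : {mfun T >-> T'} :=
  HB.pack (idfun : T -> T') (isMeasurableFun.Build _ _ _ _ _ measurable_id_sub).

Variable m : {finite_measure set T -> \bar R}.

(* [m] restricted to the sub-sigma-algebra [G], as a measure on [T']. *)
Definition msub : set T' -> \bar R := pushforward m sub_id.

Let msub0 : msub set0 = 0. Proof. exact: measure0. Qed.
Let msub_ge0 A : 0 <= msub A. Proof. exact: measure_ge0. Qed.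
Let msub_sigma_additive : semi_sigma_additive msub.
Proof. exact: measure_semi_sigma_additive. Qed.
HB.instance Definition _ := isMeasure.Build _ _ _ msub
  msub0 msub_ge0 msub_sigma_additive.

Let msub_fin : fin_num_fun msub.
Proof. by move=> A; rewrite measurableGE => GA; exact/fin_num_measure/subG. Qed.
HB.instance Definition _ := Measure_isFinite.Build _ _ _ msub msub_fin.

Lemma ge0_integral_msub (E : set T) (f : T -> \bar R) : G E ->
  measurable_fun (setT : set T') (f : T' -> \bar R) -> (forall x, 0 <= f x) ->
  \int[msub]_(x in E) f x = \int[m]_(x in E) f x.
Proof.
move=> GE mf f0; rewrite ge0_integral_pushforward//; first exact/measurable_subP.
exact: measurable_funTS.
Qed.

End sub_sigma_algebra.

Lemma ge0_integral_mrestr d (T : measurableType d) (R : realType)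
    (m : {measure set T -> \bar R}) (M : set T) (mM : measurable M)
    (f : T -> \bar R) :
  measurable_fun setT f -> (forall x, 0 <= f x) ->
  \int[mrestr m mM]_x f x = \int[m]_(x in M) f x.
Proof.
move=> mf f0; have mCM : measurable (~` M) by exact: measurableC.
rewrite -(setUv M) ge0_integral_setU//; last 2 first.
- by rewrite setUv.
- by apply/disj_setPS => x [].
rewrite (@null_set_integral _ _ _ (mrestr m mM) (~` M))//; last 2 first.
- exact: measurable_funTS.
- by transitivity (m (~` M `&` M)); [|rewrite setICl measure0].
rewrite adde0; apply: eq_measure_integral => A mA AM.
by transitivity (m (A `&` M)); [|rewrite setIidl].
Qed.

Section conditional_probability.
Context d (T : measurableType d) (R : realType) (P : probability T R).
Context (G : set (set T)) (saG : sigma_algebra setT G) (subG : G `<=` measurable).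
Local Notation T' := (g_sigma_algebraType G).
Local Notation PG := (msub saG subG P).
Local Notation msubM mM := (msub saG subG (mrestr P mM)).

Variables (M : set T) (mM : measurable M).

Lemma msub_mrestr_dominates : msubM mM `<< PG.
Proof.
apply/null_content_dominatesP => A mA PA0; apply/eqP.
have mAT : measurable (A : set T) := subG ((measurable_subP saG _).1 mA).
rewrite eq_le measure_ge0 andbT -[leRHS]PA0.
by apply: le_measure; rewrite ?inE//=; exact: measurableI.
Qed.

Local Notation dPG := (@Radon_Nikodym_SigmaFinite.f _ T' R (msubM mM) PG).

(* A version of P(M | G): the density of P(. `&` M) with respect to P, both
   restricted to G. *)
Definition condprob (x : T) : R := fine (dPG x).

Let dPGE x : dPG x = (condprob x)%:E.
Proof.
by rewrite fineK//; exact: Radon_Nikodym_SigmaFinite.f_fin_num msub_mrestr_dominates _.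
Qed.

Lemma condprob_ge0 x : (0 <= condprob x)%R.
Proof.
by rewrite -lee_fin -dPGE; exact: Radon_Nikodym_SigmaFinite.f_ge0 msub_mrestr_dominates _.
Qed.

Let measurable_dPG : measurable_fun (setT : set T') dPG.
Proof.
exact: measurable_int (Radon_Nikodym_SigmaFinite.f_integrable msub_mrestr_dominates).
Qed.

Lemma measurable_condprob_sub : measurable_fun (setT : set T') (condprob : T' -> R).
Proof. exact: measurableT_comp measurable_dPG. Qed.

Lemma measurable_condprob : measurable_fun setT condprob.
Proof. exact: measurable_fun_sub measurable_condprob_sub. Qed.

Lemma integral_condprob (E : set T) : G E ->
  \int[P]_(x in E) (condprob x)%:E = P (M `&` E).
Proof.
move=> GE; have mE := (measurable_subP saG _).2 GE.
under eq_integral do rewrite -dPGE.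
rewrite -(ge0_integral_msub saG subG P GE measurable_dPG); last first.
  by move=> x; rewrite dPGE lee_fin condprob_ge0.
rewrite -Radon_Nikodym_SigmaFinite.f_integral//; last exact: msub_mrestr_dominates.
by transitivity (P (E `&` M)); last rewrite setIC.
Qed.

Lemma integrable_condprob : P.-integrable setT (EFin \o condprob).
Proof.
apply/integrableP; split; first exact/measurable_EFinP/measurable_condprob.
under eq_integral do rewrite /= ger0_norm ?condprob_ge0//.
rewrite integral_condprob; last exact: sub_sigma_algebraT saG.
by rewrite ltey_eq fin_num_measure//; exact: measurableI.
Qed.

Lemma ge0_integral_mul_condprob (psi : T -> \bar R) :
  measurable_fun (setT : set T') (psi : T' -> \bar R) -> (forall x, 0 <= psi x) ->
  \int[P]_x (psi x * (condprob x)%:E) = \int[P]_(x in M) psi x.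
Proof.
move=> mpsi psi0; have GT := sub_sigma_algebraT saG.
under eq_integral do rewrite -dPGE.
rewrite -(ge0_integral_msub saG subG P GT); last 2 first.
- exact: emeasurable_funM.
- by move=> x; rewrite mule_ge0// dPGE lee_fin condprob_ge0.
rewrite Radon_Nikodym_SigmaFinite.change_of_variables//; last exact: msub_mrestr_dominates.
rewrite ge0_integral_msub// ge0_integral_mrestr//.
exact: (measurable_fun_sub saG subG mpsi).
Qed.
End conditional_probability.

Section conditional_expectation.
Context d (T : measurableType d) (R : realType) (P : probability T R).
Context (G : set (set T)) (saG : sigma_algebra setT G) (subG : G `<=` measurable).

Lemma is_cond_exp_indic (M : set T) (mM : measurable M) (k : R) :
  is_cond_exp P G (fun x => k * \1_M x)%R (fun x => k * condprob P saG subG mM x)%R.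
Proof.
set h := condprob P saG subG mM.
split.
- apply: (measurable_wrt_sub saG).
  by apply: measurable_funM => //; exact: measurable_condprob_sub.
- rewrite (_ : _ \o _ = fun x => k%:E * (EFin \o h) x); last first.
    by apply/funext => x; rewrite /= EFinM.
  by apply: integrableZl => //; exact: integrable_condprob.
- move=> E GE; have mE := subG GE.
  under eq_integral do rewrite EFinM.
  under [RHS]eq_integral do rewrite EFinM.
  rewrite integralZl//; last exact: integrableS (integrable_condprob _ _ _ _).
  rewrite integralZl//; last exact: integrableS (integrable_indic _ _).
  by rewrite integral_condprob// integral_indic.
Qed.

Lemma integral_condprobC (M N : set T) (mM : measurable M) (mN : measurable N) :
  \int[P]_(x in M) (condprob P saG subG mN x)%:E =
  \int[P]_(x in N) (condprob P saG subG mM x)%:E.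
Proof.
have cp0 (K : set T) (mK : measurable K) x : 0 <= (condprob P saG subG mK x)%:E.
  by rewrite lee_fin condprob_ge0.
have mcp (K : set T) (mK : measurable K) :
    measurable_fun (setT : set (g_sigma_algebraType G))
      (fun x => (condprob P saG subG mK x)%:E).
  by apply: measurableT_comp => //; exact: measurable_condprob_sub.
rewrite -(ge0_integral_mul_condprob P saG subG mM (mcp _ mN) (cp0 _ mN)).
rewrite -(ge0_integral_mul_condprob P saG subG mN (mcp _ mM) (cp0 _ mM)).
by apply: eq_integral => x _; rewrite muleC.
Qed.

End conditional_expectation.

Lemma mean0_abse_integral_le d (T : measurableType d) (R : realType)
    (mu : {measure set T -> \bar R}) (u : T -> R) (S : set T) :
  measurable S -> mu.-integrable setT (EFin \o u) -> \int[mu]_x (u x)%:E = 0 ->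
  2%:E * `|\int[mu]_(x in S) (u x)%:E| <= \int[mu]_x `|(u x)%:E|.
Proof.
move=> mS iu u0; have mCS : measurable (~` S) by exact: measurableC.
have dS : [disjoint S & ~` S] by apply/disj_setPS => x [].
have mfu : measurable_fun setT (EFin \o u) := measurable_int _ iu.
have fin (E : set T) : measurable E -> \int[mu]_(x in E) (u x)%:E \is a fin_num.
  by move=> mE; exact/integrable_fin_num/(integrableS measurableT _ (@subsetT _ _) iu).
have /eqP : \int[mu]_(x in S `|` ~` S) (u x)%:E = 0 by rewrite setUv.
rewrite integral_setU//; last by rewrite setUv.
rewrite -(setUv S) ge0_integral_setU//; last by rewrite setUv; exact: measurableT_comp.
rewrite -(fineK (fin _ mS)) -(fineK (fin _ mCS)) -EFinD eqe addr_eq0 => /eqP ab.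
apply: le_trans (leeD (le_abse_integral _ mS (measurable_funTS mfu))
  (le_abse_integral _ mCS (measurable_funTS mfu))).
rewrite -(fineK (fin _ mS)) -(fineK (fin _ mCS)) ab !abse_EFin normrN.
by rewrite -EFinD -EFinM mulr2n mulrDl mul1r.
Qed.

Section sigma_subfield.
Context d (T : measurableType d) (R : realType) (P : probability T R).
Variable A : set (set T).
Hypothesis sA : sigma_subfield P A.

Lemma sigma_subfield_sigma_algebra : sigma_algebra setT A.
Proof. by case: sA. Qed.

Lemma sigma_subfield_sub : A `<=` measurable.
Proof. by case: sA. Qed.

Lemma sigma_subfield_null (N : set T) : measurable N -> P N = 0 -> A N.
Proof.
case: sA => _ _ -> mN PN0; apply: sub_sigma_algebra; right; split => //.
Qed.

Lemma sigma_subfield_ae_eq (S D : set T) : measurable S -> A D ->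
  P (S `\` D) = 0 -> P (D `\` S) = 0 -> A S.
Proof.
move=> mS AD PSD PDS; have mD := sigma_subfield_sub AD.
have -> : S = (D `\` (D `\` S)) `|` (S `\` D).
  apply/seteqP; split => [x Sx|x [[Dx /not_andP[//|/contrapT//]]|[]//]].
  by have [Dx|nDx] := pselect (D x); [left; split => // -[]|right].
have saA := sigma_subfield_sigma_algebra.
have AT' (X : set T) : A X -> measurable (X : set (g_sigma_algebraType A)).
  by move/(measurable_subP saA).
apply/(measurable_subP saA); apply: measurableU; first apply: measurableD.
all: apply: AT' => //; apply: sigma_subfield_null => //; exact: measurableD.
Qed.

End sigma_subfield.

Section condexp_diff_opnorm.
Context d (T : measurableType d) (R : realType) (P : probability T R).

Lemma condexp_diff_opnormC p (A B : set (set T)) :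
  condexp_diff_opnorm P p A B = condexp_diff_opnorm P p B A.
Proof.
rewrite /condexp_diff_opnorm; congr ereal_sup; apply/seteqP.
split=> v [f [gA [gB [fp f1 eA eB ->]]]]; exists f, gB, gA; split => //.
all: rewrite -Lnorm_abse -[RHS]Lnorm_abse; congr Lnorm; apply/funext => x /=.
all: by rewrite distrC.
Qed.

Lemma condexp_diff_opnorm_ge p (A B : set (set T)) (f gA gB : T -> R) :
  in_Lp P p f -> Lnorm P p (EFin \o f) <= 1 ->
  is_cond_exp P A f gA -> is_cond_exp P B f gB ->
  Lnorm P p (fun x => (gA x - gB x)%:E) <= condexp_diff_opnorm P p A B.
Proof. by move=> fp f1 eA eB; apply: ereal_sup_ubound; exists f, gA, gB. Qed.

Lemma Lnorm1_cond_exp_diff_ge (A B : set (set T)) (S : set T) (f gA gB : T -> R) :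
  A setT -> B setT -> A S -> measurable S ->
  is_cond_exp P A f gA -> is_cond_exp P B f gB ->
  2%:E * `|\int[P]_(x in S) (f x)%:E - \int[P]_(x in S) (gB x)%:E|
    <= Lnorm P 1 (fun x => (gA x - gB x)%:E).
Proof.
move=> AT BT AS mS [_ iA eA] [_ iB eB].
have iAB : P.-integrable setT (EFin \o (fun x => gA x - gB x)%R).
  rewrite (_ : _ \o _ = (EFin \o gA) \- (EFin \o gB)); first exact: integrableB.
  by apply/funext => x; rewrite /= EFinB.
have iS (g : T -> R) : P.-integrable setT (EFin \o g) -> P.-integrable S (EFin \o g).
  exact: integrableS.
rewrite Lnorm1; apply: le_trans (mean0_abse_integral_le mS iAB _); last first.
  rewrite integralB_EFin// (eB _ BT) (eA _ AT) subee//.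
  by rewrite -(eA _ AT); exact: integrable_fin_num iA.
by rewrite integralB_EFin ?iS// (eA _ AS).
Qed.

Lemma Lnorm_infty_le (u : T -> R) (c : R) :
  (forall x, `|u x| <= c)%R -> Lnorm P +oo (EFin \o u) <= c%:E.
Proof.
move=> uc; rewrite unlock /= probability_setT lte_fin ltr01.
by apply/ess_supP; apply: aeW => x /=; rewrite lee_fin.
Qed.

Lemma Lnorm_infty_ge (u : T -> R) (N : set T) (c : R) :
  measurable N -> P N != 0 -> (forall x, N x -> c <= `|u x|)%R ->
  c%:E <= Lnorm P +oo (EFin \o u).
Proof.
move=> mN PN0 cu; rewrite unlock /= probability_setT lte_fin ltr01.
rewrite leNgt; apply/negP => lt_c.
have [N0 [mN0 PN00 sub]] := ess_sup_ge P (abse \o (EFin \o u)).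
move/eqP: PN0; apply; apply: (subset_measure0 mN mN0 _ PN00) => x Nx.
apply: sub => /= le_sup; have := le_lt_trans le_sup lt_c.
by rewrite lte_fin ltNge cu.
Qed.

End condexp_diff_opnorm.

Section distinct_sigma_subfields.
Context d (T : measurableType d) (R : realType) (P : probability T R).
Variables (A B : set (set T)) (S : set T).
Hypotheses (sA : sigma_subfield P A) (sB : sigma_subfield P B).
Hypotheses (AS : A S) (nBS : ~ B S).

Let saA := sigma_subfield_sigma_algebra sA.
Let saB := sigma_subfield_sigma_algebra sB.
Let subA := sigma_subfield_sub sA.
Let subB := sigma_subfield_sub sB.
Let mS : measurable S := subA AS.
Let h := condprob P saB subB mS.
Let D := h @^-1` [set` `]2^-1%R, +oo[%R].

Let BD : B D.
Proof.
apply: (measurable_wrt_sub saB (measurable_condprob_sub P saB subB mS)).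
exact: measurable_itv.
Qed.

Let mD : measurable D := subB BD.

Let Dh x : D x <-> (2^-1 < h x)%R.
Proof. by rewrite /D /= in_itv /= andbT. Qed.

Lemma measure_setD_condprob_neq0 : P (S `\` D) != 0 \/ P (D `\` S) != 0.
Proof.
have [PSD|] := eqVneq (P (S `\` D)) 0; last by left.
have [PDS|] := eqVneq (P (D `\` S)) 0; last by right.
by exfalso; exact/nBS/(sigma_subfield_ae_eq sB mS BD).
Qed.

Lemma half_le_abs_indic_condprob x :
  (S `\` D) x \/ (D `\` S) x -> (1 / 2 <= `|\1_S x - h x|)%R.
Proof.
have h0 : (0 <= h x)%R := condprob_ge0 P saB subB mS x.
case=> [[Sx /Dh/negP] | [/Dh hx nSx]].
  by rewrite -leNgt => hx; rewrite indicE mem_set//= mulr1n ger0_norm; lra.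
by rewrite indicE memNset//= sub0r normrN ger0_norm; lra.
Qed.

Lemma condexp_diff_opnorm_infty_ge_half : (1 / 2)%:E <= condexp_diff_opnorm P +oo A B.
Proof.
have eA : is_cond_exp P A \1_S \1_S.
  split=> //; last exact: integrable_indic.
  apply: (measurable_wrt_sub saA); apply: measurable_indic.
  exact/(measurable_subP saA).
have eB : is_cond_exp P B \1_S h.
  have e1 : \1_S = (fun x => 1 * \1_S x)%R :> (T -> R) by apply/funext => x; rewrite mul1r.
  have e2 : h = (fun x => 1 * h x)%R by apply/funext => x; rewrite mul1r.
  by rewrite e2 e1; exact: is_cond_exp_indic.
have f1 : Lnorm P +oo (EFin \o \1_S) <= 1.
  by apply: Lnorm_infty_le => x; rewrite indicE; case: (_ \in _); rewrite ?normr1 ?normr0.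
apply: le_trans (condexp_diff_opnorm_ge _ f1 eA eB); last first.
  by split; [exact: measurable_indic|exact: le_lt_trans f1 (ltry _)].
have [PC0|PC0] := measure_setD_condprob_neq0.
  apply: (Lnorm_infty_ge (N := S `\` D)) => //; first exact: measurableD.
  by move=> x SDx; apply: half_le_abs_indic_condprob; left.
apply: (Lnorm_infty_ge (N := D `\` S)) => //; first exact: measurableD.
by move=> x DSx; apply: half_le_abs_indic_condprob; right.
Qed.


Let fin_int_h (E : set T) : measurable E -> \int[P]_(x in E) (h x)%:E \is a fin_num.
Proof.
move=> mE; apply: integrable_fin_num => //.
exact: integrableS (integrable_condprob _ _ _ _).
Qed.

Let measurable_h (E : set T) : measurable_fun E (fun x => (h x)%:E).
Proof. exact/measurable_EFinP/measurable_funTS/measurable_condprob. Qed.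

Lemma condexp_diff_opnorm1_ge1_witness (C : set T) (mC : measurable C) : P C != 0 ->
  (2^-1)%:E * P C <= `|P (C `&` S) - \int[P]_(x in C) (h x)%:E| ->
  1 <= condexp_diff_opnorm P 1 A B.
Proof.
move=> PC0 hC; have fin_h := fin_int_h mC.
have fin_CS : P (C `&` S) \is a fin_num by rewrite fin_num_measure//; exact: measurableI.
set c := fine (P C); have PCE : P C = c%:E by rewrite /c fineK// fin_num_measure.
have c0 : (0 < c)%R by rewrite -lte_fin -PCE lt0e PC0 measure_ge0.
pose f x := (c^-1 * \1_C x)%R.
have eA := is_cond_exp_indic P saA subA mC c^-1.
have eB := is_cond_exp_indic P saB subB mC c^-1.
have f1 : Lnorm P 1 (EFin \o f) = 1.
  have f0 x : (0 <= f x)%R by rewrite mulr_ge0 ?invr_ge0 ?indicE ?ler0n ?ltW.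
  rewrite Lnorm1 (eq_integral (fun x => c^-1%:E * (\1_C x)%:E)); last first.
    by move=> x _; rewrite /= ger0_norm ?f0// -EFinM.
  rewrite integralZl//; last exact: integrable_indic.
  rewrite integral_indic// setIT; transitivity (c^-1%:E * c%:E); first by congr (_ * _).
  by rewrite -EFinM mulVf// gt_eqF.
apply: le_trans (condexp_diff_opnorm_ge _ _ eA eB); last 2 first.
- by split; [exact/measurable_funM/measurable_indic|rewrite f1 ltry].
- by rewrite f1.
apply: le_trans (Lnorm1_cond_exp_diff_ge _ _ AS mS eA eB); last 2 first.
- exact: sub_sigma_algebraT saA.
- exact: sub_sigma_algebraT saB.
have -> : \int[P]_(x in S) (c^-1 * \1_C x)%:E = c^-1%:E * P (C `&` S).
  under eq_integral do rewrite EFinM.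
  by rewrite integralZl ?integral_indic//; exact: integrableS (integrable_indic _ _).
have -> : \int[P]_(x in S) (c^-1 * condprob P saB subB mC x)%:E =
    c^-1%:E * \int[P]_(x in C) (h x)%:E.
  under eq_integral do rewrite EFinM.
  rewrite integralZl ?(integral_condprobC P saB subB mS mC)//.
  exact: integrableS (integrable_condprob _ _ _ _).
move: hC; rewrite PCE -(fineK fin_h) -(fineK fin_CS) -!EFinM -!EFinB !abse_EFin.
rewrite !lee_fin -mulrBr normrM (gtr0_norm (_ : 0 < c^-1)%R) ?invr_gt0// => hC.
have cV : (c^-1 * c = 1)%R by rewrite mulVf// gt_eqF.
have cV0 : (0 < c^-1)%R by rewrite invr_gt0.
nra.
Qed.


Lemma condexp_diff_opnorm1_ge1 : 1 <= condexp_diff_opnorm P 1 A B.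
Proof.
have h0 x : (0 <= h x)%R := condprob_ge0 P saB subB mS x.
have [PC0|PC0] := measure_setD_condprob_neq0.
- have mC : measurable (S `\` D) by exact: measurableD.
  apply: (condexp_diff_opnorm1_ge1_witness mC PC0).
  have le_h : \int[P]_(x in S `\` D) (h x)%:E <= (2^-1)%:E * P (S `\` D).
    rewrite -integral_cst//; apply: ge0_le_integral => //.
      by move=> x _; rewrite lee_fin.
    by move=> x [_ /Dh/negP]; rewrite -leNgt lee_fin.
  rewrite setIidl; last by move=> x [].
  apply: le_trans (lee_abs _).
  move: le_h; rewrite -(fineK (fin_int_h mC)) -(fineK (fin_num_measure P _ mC)).
  by rewrite -!EFinM -EFinB !lee_fin; lra.
- have mC : measurable (D `\` S) by exact: measurableD.
  apply: (condexp_diff_opnorm1_ge1_witness mC PC0).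
  have le_h : (2^-1)%:E * P (D `\` S) <= \int[P]_(x in D `\` S) (h x)%:E.
    rewrite -integral_cst//; apply: ge0_le_integral => //.
      by move=> x _; rewrite lee_fin.
    by move=> x [/Dh/ltW]; rewrite lee_fin.
  rewrite (_ : _ `&` S = set0); last by apply/seteqP; split=> x // [[]].
  by rewrite measure0 sub0e abseN; apply: le_trans (lee_abs _).
Qed.

End distinct_sigma_subfields.

Lemma condexp_diff_opnorm_ge_neq d (T : measurableType d) (R : realType)
    (P : probability T R) (A B : set (set T)) :
  sigma_subfield P A -> sigma_subfield P B -> A <> B ->
  1 <= condexp_diff_opnorm P 1 A B /\ (1 / 2)%:E <= condexp_diff_opnorm P +oo A B.
Proof.
move=> sA sB AB.
have [[S AS nBS]|nAB] := pselect (exists2 S, A S & ~ B S).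
  split; [exact: condexp_diff_opnorm1_ge1 sA sB AS nBS|
          exact: condexp_diff_opnorm_infty_ge_half sA sB AS nBS].
have [[S BS nAS]|nBA] := pselect (exists2 S, B S & ~ A S).
  rewrite !(condexp_diff_opnormC _ _ A).
  split; [exact: condexp_diff_opnorm1_ge1 sB sA BS nAS|
          exact: condexp_diff_opnorm_infty_ge_half sB sA BS nAS].
exfalso; apply: AB; apply/seteqP; split=> S.
  by move=> AS; apply: contrapT => nBS; apply: nAB; exists S.
by move=> BS; apply: contrapT => nAS; apply: nBA; exists S.
Qed.

Lemma cvg0_near_gap (R : realType) (u : nat -> \bar R) (c : \bar R) (Q : nat -> Prop) :
  u @ \oo --> 0 -> 0 < c -> (forall n, ~ Q n -> c <= u n) -> \forall n \near \oo, Q n.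
Proof.
move=> u0 c0 uc; have : \forall n \near \oo, u n < c.
  exact: u0 (fun x => x < c) (open_ereal_lt' c0).
apply: filterS => n ltc.
by apply: contrapT => nQ; move: ltc; rewrite ltNge uc.
Qed.

Theorem mainTheorem12 (d : measure_display) (T : measurableType d)
  (R : realType) (P : probability T R) :
  (forall A B : set (set T), sigma_subfield P A -> sigma_subfield P B -> A <> B ->
     1 <= condexp_diff_opnorm P 1 A B /\
     (1 / 2)%:E <= condexp_diff_opnorm P +oo A B) /\
  (forall Bs : nat -> set (set T), (forall n, sigma_subfield P (Bs n)) ->
     ((fun n => condexp_diff_opnorm P 1 (Bs n) (Bs 0%N)) @ \oo --> 0 \/
      (fun n => condexp_diff_opnorm P +oo (Bs n) (Bs 0%N)) @ \oo --> 0) ->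
     \forall n \near \oo, Bs n = Bs 0%N).
Proof.
have bounds := @condexp_diff_opnorm_ge_neq d T R P.
split=> // Bs sBs [cvg1|cvgoo].
- apply: (cvg0_near_gap cvg1 lte01) => n /(bounds _ _ (sBs n) (sBs 0%N)).
  by case.
- apply: (cvg0_near_gap cvgoo (_ : 0 < (1 / 2)%:E)) => [|n].
    by rewrite lte_fin divr_gt0.
  by move/(bounds _ _ (sBs n) (sBs 0%N)); case.
Qed.
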